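(* Consider $\dot y=A(t)y+B(t)(u+\Delta(y,t))$, $y\in\mathbb{R}^{\bar n}$, $u\in\mathbb{R}^{\bar m}$, with continuous, bounded, $T$-periodic $A,B$ and unknown bounded $\Delta$, and a continuous $T$-periodic $K(t)$ such that the origin of $\dot\chi=A^{cl}(t)\chi$, $A^{cl}=A+BK$, is exponentially stable, with state-transition matrix $\Psi_{A^{cl}}$. Let $(L(t),F)$ be a real $cT$-periodic Floquet--Lyapunov factorization of this closed-loop system for some positive integer $c$, i.e. $\Psi_{A^{cl}}(t,0)=L(t)e^{Ft}$ with $F$ real constant and $L$ real, nonsingular, $\mathcal{C}^1$, $L(t+cT)=L(t)$. Suppose $F$ has a real invariant subspace $\Lambda$ of codimension $\bar m$ ($F\Lambda\subseteq\Lambda$), and let $\hat S\in\mathbb{R}^{\bar m\times\bar n}$ be a full-rank left annihilator of $\Lambda$. If $S(t):=\hat S L^{-1}(t)$ satisfies $\operatorname{rank}[S(t)B(t)]=\bar m$ for all $t\in[0,cT)$, then forward invariance of $S(t)y(t)\equiv0$ for $t\ge t_0$ corresponds to the system experiencing the equivalent control $u_{eq}(t)=K(t)y(t)-\Delta(y(t),t)$ for all $t\ge t_0$.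
   Context: Equivalent control: the control obtained from requiring $\frac{d}{dt}(S(t)y(t))\equiv0$ along motions satisfying $S(t)y(t)=0$. *)

From HB Require Import structures.
From mathcomp Require Import all_boot all_order all_algebra.
From mathcomp Require Import all_classical all_reals all_analysis.
Set Implicit Arguments. Unset Strict Implicit. Unset Printing Implicit Defensive.
Import Order.TTheory GRing.Theory Num.Theory.
Import numFieldNormedType.Exports.
Local Open Scope ring_scope.

Definition mx_has_deriv (R : realType) (p q : nat)
  (f : R -> 'M[R]_(p, q)) (t : R) (D : 'M[R]_(p, q)) : Prop :=
  forall i j, is_derive t 1 (fun s => f s i j) (D i j).

Definition mx_continuous (R : realType) (p q : nat) (f : R -> 'M[R]_(p, q)) : Prop :=
  forall i j, continuous (fun t => f t i j).

Definition mx_bounded (R : realType) (p q : nat) (f : R -> 'M[R]_(p, q)) : Prop :=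
  exists M : R, forall t i j, `|f t i j| <= M.

Definition mx_periodic (R : realType) (p q : nat) (P : R) (f : R -> 'M[R]_(p, q)) : Prop :=
  forall t, f (t + P) = f t.

Definition mx_C1 (R : realType) (p q : nat) (f : R -> 'M[R]_(p, q)) : Prop :=
  exists f' : R -> 'M[R]_(p, q),
    (forall t, mx_has_deriv f t (f' t)) /\ mx_continuous f'.

Definition is_state_transition (R : realType) (n : nat)
  (Acl : R -> 'M[R]_n) (Psi : R -> R -> 'M[R]_n) : Prop :=
  (forall s, Psi s s = 1%:M) /\
  (forall t s, mx_has_deriv (fun tau => Psi tau s) t (Acl t *m Psi t s)).

(* E(t) = e^{F t}: the matrix exponential, i.e. the solution of
   E(0) = I, E'(t) = F E(t). *)
Definition is_mexp (R : realType) (n : nat) (F : 'M[R]_n) (E : R -> 'M[R]_n) : Prop :=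
  E 0 = 1%:M /\ (forall t, mx_has_deriv E t (F *m E t)).

Definition exp_stable_tm (R : realType) (n : nat) (Psi : R -> R -> 'M[R]_n) : Prop :=
  exists k lam : R, 0 < k /\ 0 < lam /\
    forall t s, s <= t -> forall i j, `|Psi t s i j| <= k * expR (- (lam * (t - s))).

From HB Require Import structures.
From mathcomp Require Import all_boot all_order all_algebra.
From mathcomp Require Import all_classical all_reals all_analysis.
From mathcomp Require Import perm ring.
Import Order.TTheory GRing.Theory Num.Theory.
Import numFieldNormedType.Exports.
Set Implicit Arguments. Unset Strict Implicit. Unset Printing Implicit Defensive.
Local Open Scope ring_scope.

(* Since Lam is F-invariant, so is its annihilator: Shat F = G Shat for some
   G.  Differentiating Psi(t, 0) = L(t) e^{Ft} gives L' = Acl L - L F, hence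
   S = Shat L^-1 satisfies S' = G S - S Acl and the sliding variable
   sigma = S y obeys  sigma' = G sigma + S B (u + Delta - K y).  By periodicity
   the rank condition makes S B invertible at every time.  So sigma = 0 on
   [t0, oo) forces sigma' = 0 there, i.e. u = K y - Delta; conversely this
   control reduces the equation to sigma' = G sigma, whose only solution
   vanishing at t0 is zero (the energy e^{-Ct} |sigma|^2 is nonincreasing). *)

Lemma annihilator_invariant (R : fieldType) n k (F Lam : 'M[R]_n) (S : 'M[R]_(k, n)) :
  (Lam *m F^T <= Lam)%MS -> S *m Lam^T = 0 -> (\rank Lam + \rank S = n)%N ->
  exists G : 'M[R]_k, S *m F = G *m S.
Proof.
move=> LamF SLam rkLS.
have S_ker : (S <= kermx Lam^T)%MS by rewrite sub_kermx SLam.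
have ker_S : (kermx Lam^T <= S)%MS.
  have [_ <-] := mxrank_leqif_sup S_ker.
  by rewrite mxrank_ker mxrank_tr -[X in (X - _)%N]rkLS addKn.
have /submxP[D LamFD] := LamF.
have SF_S : (S *m F <= S)%MS.
  apply: submx_trans ker_S; rewrite sub_kermx.
  by rewrite -mulmxA -[F]trmxK -trmx_mul LamFD trmx_mul mulmxA SLam mul0mx.
by exists (S *m F *m pinvmx S); rewrite mulmxKpV.
Qed.

Section Periodicity.
Variables (R : realType) (X : Type) (f : R -> X) (P : R).
Hypothesis fP : forall t, f (t + P) = f t.

Lemma periodicMn k t : f (t + k%:R * P) = f t.
Proof.
by elim: k t => [|k IHk] t; rewrite ?mul0r ?addr0 // mulrSr mulrDl mul1r addrA fP.
Qed.

Lemma periodicMz (z : int) t : f (t + z%:~R * P) = f t.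
Proof.
case: z => k; first exact: periodicMn.
by rewrite NegzE mulNr -[in RHS](subrK (k.+1%:R * P) t) periodicMn.
Qed.

Lemma periodic_reduce : 0 < P -> forall t, exists2 s, 0 <= s < P & f s = f t.
Proof.
move=> P_gt0 t; set z := Num.floor (t / P).
exists (t + (- z)%:~R * P); last exact: periodicMz.
have zP : z%:~R * P <= t < z%:~R * P + P.
  rewrite -ler_pdivlMr // floor_le /= -{2}[P]mul1r -mulrDl -ltr_pdivrMr //.
  by rewrite -[1]/(1%:~R) -intrD floorD1_gt.
by rewrite intrN mulNr subr_ge0 ltrBlDl.
Qed.

End Periodicity.

Lemma periodic_unitmx (R : realType) k P (M : R -> 'M[R]_k) :
  0 < P -> mx_periodic P M -> (forall t, 0 <= t < P -> \rank (M t) = k) ->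
  forall t, M t \in unitmx.
Proof.
move=> P_gt0 MP rkM t; rewrite -row_free_unit /row_free.
have rkMP s : \rank (M (s + P)) = \rank (M s) by rewrite MP.
by have [s s_in <-] := periodic_reduce (f := fun s => \rank (M s)) rkMP P_gt0 t; rewrite rkM.
Qed.

Section MatrixDerivative.
Variable R : realType.
Implicit Types (t : R) (p q r : nat).

Lemma mx_has_deriv_cst p q (C : 'M[R]_(p, q)) t : mx_has_deriv (fun=> C) t 0.
Proof. by move=> i j; rewrite mxE; exact: is_derive_cst. Qed.

Lemma mx_has_deriv_eq p q (X : R -> 'M[R]_(p, q)) t D D' :
  mx_has_deriv X t D' -> D' = D -> mx_has_deriv X t D.
Proof. by move=> ? <-. Qed.

Lemma mx_has_derivB p q (X Y : R -> 'M[R]_(p, q)) t dX dY :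
  mx_has_deriv X t dX -> mx_has_deriv Y t dY ->
  mx_has_deriv (fun s => X s - Y s) t (dX - dY).
Proof.
move=> HX HY i j; rewrite !mxE.
have -> : (fun s => (X s - Y s) i j) = (fun s => X s i j) - (fun s => Y s i j).
  by apply/funext => s; rewrite !mxE.
exact: is_deriveB.
Qed.

Lemma mx_has_derivM p q r (X : R -> 'M[R]_(p, q)) (Y : R -> 'M[R]_(q, r)) t dX dY :
  mx_has_deriv X t dX -> mx_has_deriv Y t dY ->
  mx_has_deriv (fun s => X s *m Y s) t (dX *m Y t + X t *m dY).
Proof.
move=> HX HY i j.
have -> : (fun s => (X s *m Y s) i j) = \sum_k (fun s => X s i k * Y s k j).
  by apply/funext => s; rewrite mxE fct_sumE.
have -> : (dX *m Y t + X t *m dY) i j = \sum_k (X t i k * dY k j + Y t k j * dX i k).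
  by rewrite !mxE addrC -big_split; apply: eq_bigr => k _; rewrite mulrC [dX i k * _]mulrC.
exact: is_derive_sum (fun k => is_deriveM (HX i k) (HY k j)).
Qed.

Lemma mx_has_deriv_unique p q (X : R -> 'M[R]_(p, q)) t D1 D2 :
  mx_has_deriv X t D1 -> mx_has_deriv X t D2 -> D1 = D2.
Proof.
move=> H1 H2; apply/matrixP => i j.
by rewrite -(derive_val (is_derive := H1 i j)) (derive_val (is_derive := H2 i j)).
Qed.

Lemma mx_has_deriv_shift p q (X : R -> 'M[R]_(p, q)) t b D :
  mx_has_deriv X (t + b) D -> mx_has_deriv (fun s => X (s + b)) t D.
Proof.
move=> HX i j; rewrite -[D i j]mulr1.
exact: (@is_derive1_comp _ (fun s => X s i j) (shift b) t _ 1 (HX i j)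
  (is_derive_shift t 1 b)).
Qed.

Lemma is_derive_right_eq0 (f : R -> R) t d :
  is_derive t 1 f d -> (forall s, t <= s -> f s = 0) -> d = 0.
Proof.
case=> f_derivable <- f0.
move/cvg_unique: (cvg_dnbhs_at_right f_derivable); apply => //=.
apply: cvg_near_cst; near=> h.
rewrite /comp !f0 ?subrr ?scaler0 // lerDr -[h%:A]/(h * 1) mulr1 ltW //.
Unshelve. all: by end_near.
Qed.

Lemma mx_has_deriv_right_eq0 p q (X : R -> 'M[R]_(p, q)) t D :
  mx_has_deriv X t D -> (forall s, t <= s -> X s = 0) -> D = 0.
Proof.
move=> HX X0; apply/matrixP => i j; rewrite mxE.
by apply: is_derive_right_eq0 (HX i j) _ => s ts; rewrite X0 ?mxE.
Qed.

End MatrixDerivative.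

Section MatrixInverseDerivative.
Variable R : realType.
Implicit Types (t : R) (n : nat).

Lemma derivable_det n (M : R -> 'M[R]_n) t :
  (forall i j, derivable (fun s => M s i j) t 1) ->
  derivable (fun s => \det (M s)) t 1.
Proof.
move=> dM.
have -> : (fun s => \det (M s)) =
    \sum_(σ : 'S_n) ((fun=> (-1) ^+ σ) * \prod_i (fun s => M s i (σ i))).
  by apply/funext => s; rewrite fct_sumE; apply: eq_bigr => σ _; rewrite /= fct_prodE.
apply: (big_ind (fun g : R -> R => derivable g t 1)) => [|f g|σ _].
- exact: derivable_cst.
- exact: derivableD.
apply: derivableM; first exact: derivable_cst.
apply: (big_ind (fun g : R -> R => derivable g t 1)) => [|f g|i _].
- exact: derivable_cst.
- exact: derivableM.
- exact: dM.
Qed.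

Lemma derivable_invmx n (L : R -> 'M[R]_n) t :
  (forall s, L s \in unitmx) -> (forall i j, derivable (fun s => L s i j) t 1) ->
  forall i j, derivable (fun s => invmx (L s) i j) t 1.
Proof.
move=> Lunit dL i j.
have -> : (fun s => invmx (L s) i j) =
    (fun s => (\det (L s))^-1 * ((-1) ^+ (j + i) * \det (row' j (col' i (L s))))).
  by apply/funext => s; rewrite /invmx Lunit !mxE.
apply: derivableM; last apply: derivableM; first apply: derivableV.
- by rewrite -unitfE -unitmxE.
- exact: derivable_det.
- exact: derivable_cst.
apply: derivable_det => a b.
by have -> : (fun s => row' j (col' i (L s)) a b) = (fun s => L s (lift j a) (lift i b))
  by apply/funext => s; rewrite !mxE.
Qed.

Lemma mx_has_derivV n (L : R -> 'M[R]_n) t dL :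
  (forall s, L s \in unitmx) -> mx_has_deriv L t dL ->
  mx_has_deriv (fun s => invmx (L s)) t (- (invmx (L t) *m dL *m invmx (L t))).
Proof.
move=> Lunit HL.
pose D := \matrix_(i, j) 'D_1 (fun s => invmx (L s) i j) t.
have HD : mx_has_deriv (fun s => invmx (L s)) t D.
  move=> i j; rewrite mxE; apply: derivableP.
  by apply: derivable_invmx => // a b; case: (HL a b).
have LD : dL *m invmx (L t) + L t *m D = 0.
  apply: mx_has_deriv_unique (mx_has_derivM HL HD) _.
  have -> : (fun s => L s *m invmx (L s)) = fun=> 1%:M by apply/funext => s; rewrite mulmxV.
  exact: mx_has_deriv_cst.
suff -> : - (invmx (L t) *m dL *m invmx (L t)) = D by [].
by rewrite -[D](mulKmx (Lunit t)) -(addr0_eq LD) mulmxN mulmxA.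
Qed.

End MatrixInverseDerivative.

Definition mx_sqnorm (R : numDomainType) p q (a : 'M[R]_(p, q)) : R :=
  \sum_i \sum_j a i j ^+ 2.

Section SquaredNorm.
Variables (R : realDomainType) (p q : nat).
Implicit Type a : 'M[R]_(p, q).

Lemma mx_sqnorm0 : mx_sqnorm (0 : 'M[R]_(p, q)) = 0.
Proof. by rewrite /mx_sqnorm big1 // => i _; rewrite big1 // => j _; rewrite mxE expr0n. Qed.

Lemma mx_sqnorm_ge0 a : 0 <= mx_sqnorm a.
Proof. by apply: sumr_ge0 => i _; apply: sumr_ge0 => j _; exact: sqr_ge0. Qed.

Lemma mx_sqnorm_eq0 a : mx_sqnorm a = 0 -> a = 0.
Proof.
move=> /eqP; rewrite psumr_eq0 => [/allP a0|i _]; last first.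
  by apply: sumr_ge0 => j _; exact: sqr_ge0.
apply/matrixP => i j; apply/eqP; rewrite mxE -sqrf_eq0.
move/implyP: (a0 i (mem_index_enum _)) => /(_ isT).
by rewrite psumr_eq0 => [/allP/(_ j (mem_index_enum _))|k _]; rewrite ?sqr_ge0.
Qed.

Lemma mx_sqnorm_row_le a i : \sum_j a i j ^+ 2 <= mx_sqnorm a.
Proof.
rewrite /mx_sqnorm (bigD1 i) //= lerDl.
by apply: sumr_ge0 => k _; apply: sumr_ge0 => j _; exact: sqr_ge0.
Qed.

Lemma mx_sqnorm_rows_dot_le a i k : `|\sum_j a i j * a k j| <= mx_sqnorm a.
Proof.
apply: le_trans (ler_norm_sum _ _ _) _; rewrite -(ler_pMn2r (_ : 0 < 2)%N) //.
have := lerD (mx_sqnorm_row_le a i) (mx_sqnorm_row_le a k).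
rewrite -mulr2n; apply: le_trans.
rewrite -sumrMnl -big_split /=; apply: ler_sum => j _.
rewrite normrM -(real_normK (num_real (a i j))) -(real_normK (num_real (a k j))).
exact: (leif_mean_square_scaled _ _).1.
Qed.

Lemma mx_sqnorm_mul_le (G : 'M[R]_p) a :
  \sum_i \sum_j a i j * (G *m a) i j <= (\sum_i \sum_k `|G i k|) * mx_sqnorm a.
Proof.
have -> : \sum_i \sum_j a i j * (G *m a) i j =
    \sum_i \sum_k G i k * \sum_j a i j * a k j.
  apply: eq_bigr => i _; under eq_bigr do rewrite mxE mulr_sumr.
  rewrite exchange_big /=; apply: eq_bigr => k _; rewrite mulr_sumr.
  by apply: eq_bigr => j _; rewrite mulrCA.
rewrite mulr_suml; apply: ler_sum => i _; rewrite mulr_suml; apply: ler_sum => k _.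
apply: le_trans (ler_norm _) _; rewrite normrM.
by apply: ler_wpM2l => //; exact: mx_sqnorm_rows_dot_le.
Qed.

End SquaredNorm.

Section LinearODE.
Variable R : realType.

Lemma is_derive_mx_sqnorm p q (X : R -> 'M[R]_(p, q)) t dX :
  mx_has_deriv X t dX ->
  is_derive t 1 (fun s => mx_sqnorm (X s)) ((\sum_i \sum_j X t i j * dX i j) *+ 2).
Proof.
move=> HX.
have -> : (fun s => mx_sqnorm (X s)) = \sum_i \sum_j (fun s => X s i j ^+ 2).
  apply/funext => s; rewrite /mx_sqnorm fct_sumE.
  by apply: eq_bigr => i _; rewrite fct_sumE.
rewrite -sumrMnl; apply: is_derive_sum => i; rewrite -sumrMnl; apply: is_derive_sum => j.
apply: is_derive_eq (is_deriveX 2 (HX i j)) _.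
by rewrite expr1 -[_ *: _]/(_ * _) -mulrA mulr_natl.
Qed.

Lemma linear_ode_unique p q (G : 'M[R]_p) (X : R -> 'M[R]_(p, q)) t0 :
  (forall t, t0 <= t -> mx_has_deriv X t (G *m X t)) -> X t0 = 0 ->
  forall t, t0 <= t -> X t = 0.
Proof.
move=> HX X0 t t0t.
pose C : R := (\sum_i \sum_k `|G i k|) *+ 2.
pose phi (s : R) := expR (- C * s) * mx_sqnorm (X s).
have phi_deriv s : t0 <= s -> is_derive s 1 phi
    (expR (- C * s) * ((\sum_i \sum_j X s i j * (G *m X s) i j) *+ 2 - C * mx_sqnorm (X s))).
  move=> t0s; have e_deriv :=
    is_derive1_comp (is_derive_expR _) (is_deriveZ (- C) (is_derive_id s 1)).
  apply: is_derive_eq (is_deriveM e_deriv (is_derive_mx_sqnorm (HX s t0s))) _.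
  rewrite /= -[(- C)%:A]/(- C * 1) -[- C *: s]/(- C * s).
  by rewrite -[_ *: (_ *+ 2)]/(_ * _) -[mx_sqnorm _ *: _]/(_ * _); ring.
have phi_derivable x : x \in `[t0, t] -> derivable phi x 1.
  by rewrite in_itv /= => /andP[t0x _]; case: (phi_deriv x t0x).
have phi_nincr : phi t <= phi t0.
  apply: (ler0_derive1_le_cc (a := t0) (b := t)); rewrite ?in_itv /= ?lexx ?t0t //.
  - by move=> x x_in; apply/phi_derivable/subset_itv_oo_cc.
  - move=> x; rewrite in_itv /= => /andP[/ltW t0x _].
    rewrite derive1E (derive_val (is_derive := phi_deriv x t0x)) pmulr_rle0 ?expR_gt0 //.
    by rewrite subr_le0 /C mulrnAl lerMn2r /= mx_sqnorm_mul_le.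
  - exact: derivable_within_continuous.
apply: mx_sqnorm_eq0; apply/eqP; rewrite eq_le mx_sqnorm_ge0 andbT.
by move: phi_nincr; rewrite /phi X0 mx_sqnorm0 mulr0 pmulr_rle0 // expR_gt0.
Qed.
End LinearODE.

Section Floquet.
Variables (R : realType) (n : nat).

Lemma is_mexp_unit (F : 'M[R]_n) E : is_mexp F E -> forall t, E t \in unitmx.
Proof.
case=> E0 E_deriv.
have E_add a b : 0 <= a -> E (a + b) = E a *m E b.
  move=> a_ge0; apply/eqP; rewrite -subr_eq0; apply/eqP.
  pose X s := E (s + b) - E s *m E b.
  apply: (linear_ode_unique (G := F) (X := X) (t0 := 0)) a_ge0.
    move=> s _; apply: mx_has_deriv_eq (mx_has_derivB
      (mx_has_deriv_shift (E_deriv (s + b)))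
      (mx_has_derivM (E_deriv s) (mx_has_deriv_cst (E b) s))) _.
    by rewrite mulmx0 addr0 -mulmxA -mulmxBr.
  by rewrite /X add0r E0 mul1mx subrr.
have E_unit a : 0 <= a -> E a \in unitmx /\ E (- a) \in unitmx.
  by move=> a_ge0; apply: mulmx1_unit; rewrite -E_add // subrr.
move=> t; have [t_ge0|t_lt0] := lerP 0 t; first by case: (E_unit t t_ge0).
have /E_unit[_] : 0 <= - t by rewrite oppr_ge0 ltW.
by rewrite opprK.
Qed.

Lemma floquet_factor_deriv (Acl : R -> 'M[R]_n) Psi L E (F : 'M[R]_n) t dL :
  is_state_transition Acl Psi -> is_mexp F E -> (forall s, Psi s 0 = L s *m E s) ->
  mx_has_deriv L t dL -> dL = Acl t *m L t - L t *m F.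
Proof.
move=> [_ Psi_deriv] mexpE PsiLE HL.
have LE_deriv : mx_has_deriv (fun s => Psi s 0) t (dL *m E t + L t *m (F *m E t)).
  have -> : (fun s => Psi s 0) = fun s => L s *m E s by apply/funext.
  exact: mx_has_derivM HL (mexpE.2 t).
move: (mx_has_deriv_unique (Psi_deriv t 0) LE_deriv).
rewrite PsiLE !mulmxA -mulmxDl => /(congr1 (mulmx^~ (invmx (E t)))).
by rewrite !mulmxK ?(is_mexp_unit mexpE) // => ->; rewrite addrK.
Qed.

Lemma sliding_variable_deriv k (Acl L : R -> 'M[R]_n) (F : 'M[R]_n)
    (Shat : 'M[R]_(k, n)) (G : 'M[R]_k) (y : R -> 'cV[R]_n) t dL dy :
  (forall s, L s \in unitmx) -> mx_has_deriv L t dL -> dL = Acl t *m L t - L t *m F ->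
  Shat *m F = G *m Shat -> mx_has_deriv y t dy ->
  mx_has_deriv (fun s => Shat *m invmx (L s) *m y s) t
    (G *m (Shat *m invmx (L t) *m y t) + Shat *m invmx (L t) *m (dy - Acl t *m y t)).
Proof.
move=> L_unit HL dL_eq SF Hy.
apply: mx_has_deriv_eq
  (mx_has_derivM (mx_has_derivM (mx_has_deriv_cst Shat t) (mx_has_derivV L_unit HL)) Hy) _.
have -> : invmx (L t) *m dL *m invmx (L t) = invmx (L t) *m Acl t - F *m invmx (L t).
  by rewrite dL_eq mulmxBr mulmxBl !mulmxA mulVmx // mul1mx -!mulmxA mulmxV // mulmx1.
rewrite mul0mx add0r mulmxN mulmxBr opprB !mulmxA SF mulmxBl mulmxBr !mulmxA.
by rewrite addrA addrAC.
Qed.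
End Floquet.

Unset Implicit Arguments.

Theorem proposition2 (R : realType) (n m : nat) (T : R)
  (A : R -> 'M[R]_n) (B : R -> 'M[R]_(n, m))
  (Delta : 'cV[R]_n -> R -> 'cV[R]_m)
  (K : R -> 'M[R]_(m, n))
  (Psi : R -> R -> 'M[R]_n)
  (c : nat) (L : R -> 'M[R]_n) (F : 'M[R]_n) (E : R -> 'M[R]_n)
  (Lam : 'M[R]_n) (Shat : 'M[R]_(m, n)) :
  0 < T ->
  mx_continuous A -> mx_bounded A -> mx_periodic T A ->
  mx_continuous B -> mx_bounded B -> mx_periodic T B ->
  (exists M : R, forall y t i, `|Delta y t i 0| <= M) ->
  mx_continuous K -> mx_periodic T K ->
  is_state_transition (fun t => A t + B t *m K t) Psi ->
  exp_stable_tm Psi ->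
  (0 < c)%N ->
  is_mexp F E ->
  (forall t, Psi t 0 = L t *m E t) ->
  (forall t, L t \in unitmx) ->
  mx_C1 L ->
  mx_periodic (c%:R * T) L ->
  \rank Lam = (n - m)%N ->
  (Lam *m F^T <= Lam)%MS ->
  \rank Shat = m ->
  Shat *m Lam^T = 0 ->
  (forall t, 0 <= t < c%:R * T -> \rank (Shat *m invmx (L t) *m B t) = m) ->
  forall (y : R -> 'cV[R]_n) (u : R -> 'cV[R]_m) (t0 : R),
    (forall t, t0 <= t ->
       mx_has_deriv y t (A t *m y t + B t *m (u t + Delta (y t) t))) ->
    ((forall t, t0 <= t -> Shat *m invmx (L t) *m y t = 0) <->
     (Shat *m invmx (L t0) *m y t0 = 0 /\
      forall t, t0 <= t -> u t = K t *m y t - Delta (y t) t)).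
Proof.
move=> T_gt0 _ _ _ _ _ B_per _ _ _ Psi_tm _ c_gt0 mexpE PsiLE L_unit
  [dL [L_deriv _]] L_per rkLam LamF rkS SLam rkSB y u t0 y_deriv.
have [G SF] : exists G, Shat *m F = G *m Shat.
  apply: annihilator_invariant LamF SLam _.
  by rewrite rkLam rkS subnK // -rkS rank_leq_col.
have SB_unit : forall t, Shat *m invmx (L t) *m B t \in unitmx.
  apply: (periodic_unitmx (P := c%:R * T)) rkSB; first by rewrite mulr_gt0 // ltr0n.
  by move=> t; rewrite L_per (periodicMn B_per).
have sigma_deriv t : t0 <= t -> mx_has_deriv (fun s => Shat *m invmx (L s) *m y s) t
    (G *m (Shat *m invmx (L t) *m y t) +
     Shat *m invmx (L t) *m B t *m (u t + Delta (y t) t - K t *m y t)).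
  move=> t0t; apply: mx_has_deriv_eq (sliding_variable_deriv L_unit (L_deriv t)
    (floquet_factor_deriv Psi_tm mexpE PsiLE (L_deriv t)) SF (y_deriv t t0t)) _.
  by rewrite mulmxDl opprD addrACA subrr add0r -[B t *m K t *m y t]mulmxA -mulmxBr !mulmxA.
split=> [S0 | [S0 u_eq] t t0t].
  split=> [|t t0t]; first exact: S0.
  have := mx_has_deriv_right_eq0 (sigma_deriv t t0t) (fun s ts => S0 s (le_trans t0t ts)).
  rewrite S0 // mulmx0 add0r => /(congr1 (mulmx (invmx (Shat *m invmx (L t) *m B t)))).
  rewrite mulKmx // mulmx0 => /eqP; rewrite subr_eq0 => /eqP <-.
  by rewrite addrK.
apply: (linear_ode_unique (G := G) (X := fun s => Shat *m invmx (L s) *m y s)) S0 t t0t.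
move=> s t0s.
by have := sigma_deriv s t0s; rewrite u_eq // subrK subrr mulmx0 addr0.
Qed.
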